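(* Let $M\ge2$, $u:\{0,1\}^M\to\mathbb R$, let $h$ be the solution of the Dirichlet problem on ${\mathbb T}^{(M)}$ with boundary data $u$, and let $a$, $\Sigma$ be as follows: $a(z^{(n)})=h(z^{(n)})-h(z^{(n-1)})$ and $\Sigma(z^{(n)})=\sum_{y\in\{0,1\}^{M-n}}u(z^{(n)}y)$. Set $b_n=(2^{M-n+1}-1)^{-1}$ for $1\le n\le M$. Then for all $z\in\{0,1\}^M$ and $1\le n\le M-1$, $$h(z^{(n)})=b_n\Sigma(z^{(n)})+\sum_{\ell=1}^{n-1}\frac{b_{n-\ell+1}\,b_{n-\ell}}{b_{n+1}}\,\Sigma(z^{(n-\ell)})$$ and $$a(z^{(n)})=b_n\Sigma(z^{(n)})+\sum_{\ell=1}^{n-1}b_{n-\ell}\,\Sigma(z^{(n-\ell)})\left(\frac{b_{n-\ell+1}}{b_{n+1}}-\frac{b_{n-\ell+1}}{b_n}\right).$$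
   Context: Binary tree: for $n\ge0$, $\{0,1\}^n$ is the set of vertices of generation $n$ (words $z=z_1\cdots z_n$; generation $0$ is the root $\emptyset$). For a vertex $z$ of generation $n$, its children are $z0,z1$, and for $0\le m\le n$, $z^{(m)}=z_1\cdots z_m$ is its ancestor in generation $m$; $zy$ denotes concatenation of words. ${\mathbb T}^{(M)}$ is the tree of generations $0,\dots,M$. Dirichlet problem: given $M\ge1$ and $u:\{0,1\}^M\to\mathbb R$, its solution is the unique $h$ on the vertices of ${\mathbb T}^{(M)}$ with $h(\emptyset)=0$, $h(z)=u(z)$ for $z\in\{0,1\}^M$, and $h(z0)+h(z1)+h(z^{(n-1)})=3h(z)$ for all $z\in\{0,1\}^n$, $1\le n<M$. *)

(* Vertices of the binary tree are words z : seq bool;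
   generation n = words of size n; root = [::]. *)
From mathcomp Require Import all_boot all_order all_algebra.
Set Implicit Arguments. Unset Strict Implicit. Unset Printing Implicit Defensive.
Import Order.TTheory GRing.Theory Num.Theory.
Local Open Scope ring_scope.

Definition anc (z : seq bool) (m : nat) : seq bool := take m z.

(* h solves the Dirichlet problem on T^(M) with boundary data u
   (u is only consulted on words of length M) *)
Definition dirichlet_sol (R : ringType) (M : nat) (u : seq bool -> R)
    (h : seq bool -> R) : Prop :=
  [/\ h [::] = 0,
      (forall z : seq bool, size z = M -> h z = u z) &
      (forall (n : nat) (z : seq bool), (1 <= n < M)%N -> size z = n ->
         h (rcons z false) + h (rcons z true) + h (anc z n.-1) = 3 * h z)].

Definition incr (R : ringType) (h : seq bool -> R) (z : seq bool) (n : nat) : R :=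
  h (anc z n) - h (anc z n.-1).

Definition Sigma (R : ringType) (M : nat) (u : seq bool -> R) (w : seq bool) : R :=
  \sum_(y : (M - size w).-tuple bool) u (w ++ y).

Definition bcoef (R : fieldType) (M n : nat) : R :=
  ((2 ^ (M - n + 1))%:R - 1)^-1.

(* Since Sigma(w) = Sigma(w0) + Sigma(w1), induction on the height d = M - |w| of w above the
   boundary and the mean-value equation 3h(w) = h(w0) + h(w1) + h(parent w) give
   Sigma(w) = (2^(d+1) - 1) h(w) - (2^d - 1) h(parent w).  With b_n = 1/(2^(M-n+1) - 1) this reads
   h(z^(n)) = b_n Sigma(z^(n)) + (b_n / b_(n+1)) h(z^(n-1)); unrolling down to h(root) = 0
   gives h(z^(n)) = sum_(j <= n) (b_(j+1) b_j / b_(n+1)) Sigma(z^(j)), from which both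
   formulas follow by reversing the index and subtracting consecutive generations. *)
From mathcomp Require Import all_boot all_order all_algebra.
From mathcomp Require Import ring zify.
Import Order.TTheory GRing.Theory Num.Theory.
Local Open Scope ring_scope.
Set Implicit Arguments. Unset Strict Implicit.

Lemma sum_tuple_cons (V : nmodType) (T : finType) k (F : seq T -> V) :
  \sum_(t : k.+1.-tuple T) F t = \sum_(x : T) \sum_(t : k.-tuple T) F (x :: t).
Proof.
rewrite pair_big /= (reindex (fun p : T * k.-tuple T => [tuple of p.1 :: p.2])) //=.
exists (fun t : k.+1.-tuple T => (thead t, [tuple of behead t])).
  by case=> x t /=; rewrite (_ : [tuple of behead (x :: t)] = t) //; apply: val_inj.
by move=> t _; apply: val_inj; case: t => [[|x s]].
Qed.

Section Sigma.

Variables (R : nzRingType) (M : nat) (u : seq bool -> R).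

Lemma Sigma_leaf w : size w = M -> Sigma M u w = u w.
Proof.
rewrite /Sigma => ->; rewrite subnn (eq_bigr (fun _ => u w)).
  by rewrite sumr_const card_tuple.
by move=> t _; rewrite tuple0 cats0.
Qed.

Lemma Sigma_children w : (size w < M)%N ->
  Sigma M u w = Sigma M u (rcons w false) + Sigma M u (rcons w true).
Proof.
move=> ltwM; have [k Ek] : exists k, (M - size w)%N = k.+1.
  by exists (M - size w).-1; rewrite prednK // subn_gt0.
rewrite /Sigma !size_rcons subnS Ek /= (sum_tuple_cons _ (fun s => u (w ++ s))) big_bool /= addrC.
by congr (_ + _); apply: eq_bigr => t _; rewrite cat_rcons.
Qed.

End Sigma.

Section Dirichlet.

Variables (R : comNzRingType) (M : nat) (u h : seq bool -> R).
Hypothesis sol : dirichlet_sol M u h.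

Lemma Sigma_sol w : (1 <= size w <= M)%N ->
  Sigma M u w = ((2 ^ (M - size w).+1)%:R - 1) * h w
                - ((2 ^ (M - size w))%:R - 1) * h (anc w (size w).-1).
Proof.
case: sol => _ h_leaf h_mean.
move Ed: (M - size w)%N => d; elim: d w Ed => [|d IH] w Ed /andP[w_gt0 leqwM].
  have szw : size w = M by lia.
  by rewrite Sigma_leaf // h_leaf // expn0 expn1 subrr mul0r subr0 -addn1 natrD addrK mul1r.
have ltwM : (size w < M)%N by lia.
rewrite Sigma_children // !IH ?size_rcons ?subnS ?Ed //; try lia.
rewrite /anc /= -!cats1 !take_size_cat // !cats1.
have mean := h_mean (size w) w ltac:(by rewrite w_gt0 ltwM) erefl.
rewrite /anc in mean; rewrite !expnS !natrM.
(* the children enter only through h w0 + h w1, which the mean-value equation eliminates *)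
transitivity ((2 * (2 ^ d)%:R - 1) * (h (rcons w false) + h (rcons w true))
              - 2 * ((2 ^ d)%:R - 1) * h w); first by ring.
rewrite -[h _ + h _](addrK (h (take (size w).-1 w))) mean; ring.
Qed.

End Dirichlet.

Lemma big_nat_rev_sub (V : nmodType) n (F : nat -> V) :
  \sum_(1 <= l < n) F (n - l)%N = \sum_(1 <= l < n) F l.
Proof. by rewrite big_nat_rev; apply: eq_big_nat => l /andP[? ?]; congr F; lia. Qed.

Lemma bcoef_neq0 (R : numFieldType) M n : bcoef R M n != 0.
Proof. by rewrite /bcoef invr_eq0 subr_eq0 pnatr_eq1 -(expn0 2) eqn_exp2l //; lia. Qed.

Section Expansion.

Variables (R : numFieldType) (M : nat) (u h : seq bool -> R) (z : seq bool).
Hypotheses (sol : dirichlet_sol M u h) (szz : size z = M).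
Local Notation b := (bcoef R M).
Local Notation S w := (Sigma M u w).

Lemma h_anc_step n : (1 <= n <= M - 1)%N ->
  h (anc z n) = b n * S (anc z n) + b n / b (n + 1) * h (anc z n.-1).
Proof.
move=> n_range; have sz_anc : size (anc z n) = n by rewrite size_takel //; lia.
have := Sigma_sol sol (w := anc z n); rewrite sz_anc /anc take_takel; last by lia.
have binv k : (b k)^-1 = (2 ^ (M - k + 1))%:R - 1 by rewrite invrK.
rewrite -[(M - n).+1]addn1 -binv (_ : (M - n = M - (n + 1) + 1)%N); last by lia.
move=> /(_ ltac:(lia)) ->; rewrite -binv.
by field; rewrite !bcoef_neq0.
Qed.

Lemma h_anc_expand n : (n <= M - 1)%N ->
  h (anc z n) = \sum_(1 <= j < n.+1) b (j + 1) * b j / b (n + 1) * S (anc z j).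
Proof.
elim: n => [|n IH] le_nM; first by case: sol; rewrite big_geq // /anc take0.
rewrite h_anc_step; last by lia.
rewrite IH /=; last by lia.
rewrite [in RHS]big_nat_recr //= addrC; congr (_ + _); first by field; rewrite bcoef_neq0.
by rewrite mulr_sumr; apply: eq_bigr => j _; rewrite -addn1; field; rewrite !bcoef_neq0.
Qed.

End Expansion.

Theorem lemma2p2 (R : realFieldType) (M : nat) (u : seq bool -> R)
    (h : seq bool -> R) :
  (2 <= M)%N ->
  dirichlet_sol M u h ->
  forall (z : seq bool) (n : nat), size z = M -> (1 <= n <= M - 1)%N ->
    h (anc z n) =
      bcoef R M n * Sigma M u (anc z n)
      + \sum_(1 <= l < n)
          (bcoef R M (n - l + 1) * bcoef R M (n - l) / bcoef R M (n + 1))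
          * Sigma M u (anc z (n - l))
    /\
    incr h z n =
      bcoef R M n * Sigma M u (anc z n)
      + \sum_(1 <= l < n)
          bcoef R M (n - l) * Sigma M u (anc z (n - l))
          * (bcoef R M (n - l + 1) / bcoef R M (n + 1)
             - bcoef R M (n - l + 1) / bcoef R M n).
Proof.
move=> _ sol z n szz /andP[n_gt0 le_nM].
set b := bcoef R M; set S := fun j => Sigma M u (anc z j).
have h_n : h (anc z n) = b n * S n + \sum_(1 <= j < n) b (j + 1) * b j / b (n + 1) * S j.
  rewrite (h_anc_expand sol szz le_nM) big_nat_recr //= addrC.
  by congr (_ + _); rewrite /b /S; field; rewrite bcoef_neq0.
have h_pred : h (anc z n.-1) = \sum_(1 <= j < n) b (j + 1) * b j / b n * S j.
  by rewrite (h_anc_expand sol szz (leq_trans (leq_pred n) le_nM)) prednK // addn1 prednK.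
split; first by rewrite h_n (big_nat_rev_sub _ (fun j => b (j + 1) * b j / b (n + 1) * S j)).
rewrite /incr h_n h_pred -addrA -sumrB.
rewrite (big_nat_rev_sub _ (fun j => b j * S j * (b (j + 1) / b (n + 1) - b (j + 1) / b n))).
by congr (_ + _); apply: eq_bigr => j _; ring.
Qed.
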